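(* For every message $M$ and formula $\phi$: $\vdash\langle M\rangle\phi\leftrightarrow\neg\neg[M]\phi$.
   Context: Fix a finite set $\mathcal{A}$ of agent names containing a distinguished name $\mathsf{CM}$. Messages: $M ::= a \mid B \mid (M,M)$ ($a\in\mathcal{A}$, $B$ optional data constants, pairs). $\mathcal{P}$ is a denumerable set of propositional variables containing atoms $\mathsf{k}_a(M)$ (''$a$ knows $M$''). Formulas: $\phi ::= P \mid \phi\wedge\phi \mid \phi\vee\phi \mid \neg\phi \mid \phi\to\phi \mid [M]\phi$. Abbreviations: $\mathrm{true}:=\mathsf{k}_{\mathsf{CM}}(\mathsf{CM})$, $\mathrm{false}:=\neg\mathrm{true}$, $\phi\leftrightarrow\psi:=(\phi\to\psi)\wedge(\psi\to\phi)$, $\langle M\rangle\phi:=\neg\neg(\mathsf{k}_{\mathsf{CM}}(M)\wedge\phi)$. LIiP is the smallest set of formulas containing all instances of: the axioms of an adequate Hilbert axiomatization of intuitionistic propositional logic; $\mathsf{k}_a(a)$; $(\mathsf{k}_a(M)\wedge\mathsf{k}_a(M'))\leftrightarrow\mathsf{k}_a((M,M'))$; $[M]\mathsf{k}_{\mathsf{CM}}(M)$; $[M](\phi\to\psi)\to([M]\phi\to[M]\psi)$; $[M]\phi\to(\mathsf{k}_{\mathsf{CM}}(M)\to\phi)$; $[M]\phi\to\langle M\rangle\phi$; $\phi\to[M]\phi$; and closed under modus ponens and the rule: if $\mathsf{k}_{\mathsf{CM}}(M)\to\mathsf{k}_{\mathsf{CM}}(M')$ is in the set then so is $[M']\phi\to[M]\phi$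 for every $\phi$. Write $\vdash\phi$ for $\phi\in\mathrm{LIiP}$. *)

From mathcomp Require Import all_boot.
Set Implicit Arguments.
Unset Strict Implicit.

Section LIiP.
(* A : agent names, CM : distinguished agent, D : data constants *)
Variables (A : Type) (CM : A) (D : Type).

Inductive msg : Type :=
  | MAgent : A -> msg
  | MData : D -> msg
  | MPair : msg -> msg -> msg.

(* Propositional variables: the atoms k_a(M), plus a denumerable supply of
   further variables. *)
Inductive pvar : Type :=
  | PK : A -> msg -> pvar
  | POther : nat -> pvar.

Inductive form : Type :=
  | FVar : pvar -> form
  | FAnd : form -> form -> form
  | FOr : form -> form -> form
  | FNot : form -> form
  | FImp : form -> form -> form
  | FBox : msg -> form -> form.

Definition fK (a : A) (M : msg) : form := FVar (PK a M).
Definition ftrue : form := fK CM (MAgent CM).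
Definition ffalse : form := FNot ftrue.
Definition fIff (p q : form) : form := FAnd (FImp p q) (FImp q p).
Definition fDia (M : msg) (p : form) : form :=
  FNot (FNot (FAnd (fK CM M) p)).

(* LIiP.  Intuitionistic propositional part: Kleene's Hilbert system for
   intuitionistic propositional logic (with primitive negation). *)
Inductive prov : form -> Prop :=
  | ax_K p q : prov (FImp p (FImp q p))
  | ax_S p q r :
      prov (FImp (FImp p (FImp q r)) (FImp (FImp p q) (FImp p r)))
  | ax_andE1 p q : prov (FImp (FAnd p q) p)
  | ax_andE2 p q : prov (FImp (FAnd p q) q)
  | ax_andI p q : prov (FImp p (FImp q (FAnd p q)))
  | ax_orI1 p q : prov (FImp p (FOr p q))
  | ax_orI2 p q : prov (FImp q (FOr p q))
  | ax_orE p q r :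
      prov (FImp (FImp p r) (FImp (FImp q r) (FImp (FOr p q) r)))
  | ax_notI p q : prov (FImp (FImp p q) (FImp (FImp p (FNot q)) (FNot p)))
  | ax_notE p q : prov (FImp (FNot p) (FImp p q))
  | ax_kself a : prov (fK a (MAgent a))
  | ax_kpair a M M' :
      prov (fIff (FAnd (fK a M) (fK a M')) (fK a (MPair M M')))
  | ax_boxK0 M : prov (FBox M (fK CM M))
  | ax_boxK M p q :
      prov (FImp (FBox M (FImp p q)) (FImp (FBox M p) (FBox M q)))
  | ax_boxT M p : prov (FImp (FBox M p) (FImp (fK CM M) p))
  | ax_boxDia M p : prov (FImp (FBox M p) (fDia M p))
  | ax_pers M p : prov (FImp p (FBox M p))
  | r_mp p q : prov (FImp p q) -> prov p -> prov q
  | r_mono M M' p :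
      prov (FImp (fK CM M) (fK CM M')) -> prov (FImp (FBox M' p) (FBox M p)).

End LIiP.

(* Persistence ([phi -> [M]phi]) gives [<M>phi -> [M]phi] under double negation;
   conversely [[M]phi -> <M>phi] is an axiom, and since [<M>phi] is itself a
   double negation, the resulting quadruple negation collapses back to
   [<M>phi].  The propositional steps are obtained through a deduction
   theorem for the Hilbert system. *)
From mathcomp Require Import all_boot.
From Stdlib Require List.

Set Implicit Arguments.
Unset Strict Implicit.

Section Intuitionistic.
Variables (A : Type) (CM : A) (D : Type).
Local Notation form := (form A D).
Local Notation prov := (@prov A CM D).

Inductive derives (G : list form) : form -> Prop :=
  | der_hyp p : List.In p G -> derives G p
  | der_prov p : prov p -> derives G p
  | der_mp p q : derives G (FImp p q) -> derives G p -> derives G q.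

Lemma derives_nil p : derives nil p -> prov p.
Proof.
elim=> [q []|q //|q r _ IHqr _ IHq]; exact: r_mp IHqr IHq.
Qed.

Lemma prov_imp_refl p : prov (FImp p p).
Proof.
exact: r_mp (r_mp (ax_S CM p (FImp p p) p) (ax_K CM p (FImp p p))) (ax_K CM p p).
Qed.

Lemma derives_imp_intro G p q : derives (p :: G) q -> derives G (FImp p q).
Proof.
elim=> [r [<-|Gr]|r prov_r|r s _ IHrs _ IHr].
- exact/der_prov/prov_imp_refl.
- exact: der_mp (der_prov _ (ax_K _ _ _)) (der_hyp Gr).
- exact: der_mp (der_prov _ (ax_K _ _ _)) (der_prov _ prov_r).
- exact: der_mp (der_mp (der_prov _ (ax_S _ _ _ _)) IHrs) IHr.
Qed.

Lemma derives_cons G a p : derives G p -> derives (a :: G) p.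
Proof.
elim=> [q Gq|q prov_q|q r _ IHqr _ IHq].
- by apply: der_hyp; right.
- exact: der_prov.
- exact: der_mp IHqr IHq.
Qed.

Lemma derives_head G p : derives (p :: G) p.
Proof. by apply: der_hyp; left. Qed.

Lemma derives_not_intro G p q :
  derives (p :: G) q -> derives (p :: G) (FNot q) -> derives G (FNot p).
Proof.
move=> Gq Gnq.
exact: der_mp (der_mp (der_prov _ (ax_notI _ _ _)) (derives_imp_intro Gq))
              (derives_imp_intro Gnq).
Qed.

Lemma prov_imp_trans p q r :
  prov (FImp p q) -> prov (FImp q r) -> prov (FImp p r).
Proof.
move=> pq qr; apply/derives_nil/derives_imp_intro.
exact: der_mp (der_prov _ qr) (der_mp (der_prov _ pq) (derives_head _ _)).
Qed.

Lemma prov_notnot_mono p q :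
  prov (FImp p q) -> prov (FImp (FNot (FNot p)) (FNot (FNot q))).
Proof.
move=> pq; apply/derives_nil/derives_imp_intro.
apply: (derives_not_intro (q := FNot p)); last exact/derives_cons/derives_head.
apply: (derives_not_intro (q := q)); last exact/derives_cons/derives_head.
exact: der_mp (der_prov _ pq) (derives_head _ _).
Qed.

Lemma prov_notnot_intro p : prov (FImp p (FNot (FNot p))).
Proof.
apply/derives_nil/derives_imp_intro.
apply: (derives_not_intro (q := p)); first exact/derives_cons/derives_head.
exact: derives_head.
Qed.

Lemma prov_not3_not p : prov (FImp (FNot (FNot (FNot p))) (FNot p)).
Proof.
apply/derives_nil/derives_imp_intro.
apply: (derives_not_intro (q := FNot (FNot p))).
- exact: der_mp (der_prov _ (prov_notnot_intro p)) (derives_head _ _).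
- exact/derives_cons/derives_head.
Qed.

Lemma prov_iff_intro p q :
  prov (FImp p q) -> prov (FImp q p) -> prov (fIff p q).
Proof. by move=> pq qp; apply: r_mp qp; apply: r_mp pq; apply: ax_andI. Qed.

End Intuitionistic.

Section Diamond.
Variables (A : Type) (CM : A) (D : Type) (M : msg A D) (phi : form A D).

Lemma prov_dia_notnot_box :
  prov CM (FImp (fDia CM M phi) (FNot (FNot (FBox M phi)))).
Proof.
apply: prov_notnot_mono.
exact: prov_imp_trans (ax_andE2 _ _ _) (ax_pers _ _ _).
Qed.

Lemma prov_notnot_box_dia :
  prov CM (FImp (FNot (FNot (FBox M phi))) (fDia CM M phi)).
Proof.
exact: prov_imp_trans (prov_notnot_mono (ax_boxDia _ _ _)) (prov_not3_not _ _).
Qed.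

End Diamond.

Theorem theorem2p58 (A : finType) (CM : A) (D : Type)
    (M : msg A D) (phi : form A D) :
  prov CM (fIff (fDia CM M phi) (FNot (FNot (FBox M phi)))).
Proof.
exact: prov_iff_intro (prov_dia_notnot_box _ _ _) (prov_notnot_box_dia _ _ _).
Qed.
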